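(* Let $G$ be a graph with $\mathrm{pw}(G)=3$, and let $C^1,\ldots,C^c$ be pairwise vertex-disjoint chunk graphs, each a union of connected components of $G$, with $G=C^1\cup\cdots\cup C^c$. For each $i$ let $\mathcal{Q}_i$ be a path decomposition of $C^i$ of width at most $3$, and let $a$ and $b$ be the numbers of path decompositions among $\mathcal{Q}_1,\ldots,\mathcal{Q}_c$ of Type A and of Type B, respectively. Then $$\min_{\pi,\ \mathbf{f}\in\{0,1\}^c}\mathrm{length}\bigl(\mathcal{Q}^{f_1}_{\pi(1)}\oplus\cdots\oplus\mathcal{Q}^{f_c}_{\pi(c)}\bigr)=\sum_{i=1}^c\mathrm{length}(\mathcal{Q}_i)-\mu(a,b),$$ where the minimum is over all permutations $\pi$ of $\{1,\ldots,c\}$ and vectors $\mathbf{f}=(f_1,\ldots,f_c)\in\{0,1\}^c$, $\mathcal{Q}_i^0=\mathcal{Q}_i$, $\mathcal{Q}_i^1$ is the reverse of $\mathcal{Q}_i$, and $\mu(a,b)=\max(0,a-1)$ if $b=0$ and $\mu(a,b)=a+\lfloor b/2\rfloor$ if $b>0$.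
   Context: A path decomposition of $G$ is a sequence $(X_1,\ldots,X_l)$ of subsets of $V(G)$ covering $V(G)$, such that every edge lies in some $X_i$, and $X_i\cap X_k\subseteq X_j$ whenever $i\leq j\leq k$; width is $\max_i|X_i|-1$, length is $l$; $\mathrm{pw}(G)$ is the minimum width. A component is big if it has at least $3$ vertices; a chunk graph has exactly one big component. A path decomposition $(X_1,\ldots,X_l)$ of a chunk graph is of Type A if $|X_1|\leq 2$ and $|X_l|\leq 2$; Type B if exactly one of $|X_1|\leq 2$, $|X_l|\leq 2$ holds; (Type C if $|X_1|>2$ and $|X_l|>2$). The reverse of $(X_1,\ldots,X_l)$ is $(X_l,\ldots,X_1)$. For path decompositions $\mathcal{P}_1=(X^1_1,\ldots,X^1_{l_1})$, $\mathcal{P}_2=(X^2_1,\ldots,X^2_{l_2})$ of vertex-disjoint graphs, $\mathcal{P}_1\oplus\mathcal{P}_2=(X^1_1,\ldots,X^1_{l_1-1},X^1_{l_1}\cup X^2_1,X^2_2,\ldots,X^2_{l_2})$ if $|X^1_{l_1}|\leq 2$ and $|X^2_1|\leq 2$, and $(X^1_1,\ldots,X^1_{l_1},X^2_1,\ldots,X^2_{l_2})$ otherwise; multiple concatenations are evaluated left to right: $\mathcal{P}_1\oplus\cdots\oplus\mathcal{P}_c=(\cdots((\mathcal{P}_1\oplus\mathcal{P}_2)\oplus\mathcal{P}_3)\cdots)\oplus\mathcal{P}_c$. *)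

From mathcomp Require Import all_boot all_order all_fingroup.
Set Implicit Arguments. Unset Strict Implicit. Unset Printing Implicit Defensive.

Section Defs.
Variable T : finType.

Definition simple_graph (e : rel T) := symmetric e /\ irreflexive e.

Definition is_path_decomp (e : rel T) (V : {set T}) (P : seq {set T}) : Prop :=
  [/\ (forall X, X \in P -> X \subset V),
      (forall x, x \in V -> exists2 X, X \in P & x \in X),
      (forall x y, x \in V -> y \in V -> e x y ->
          exists2 X, X \in P & (x \in X) && (y \in X)) &
      (forall i j k, i <= j -> j <= k -> k < size P ->
          nth set0 P i :&: nth set0 P k \subset nth set0 P j)].

(* width = max bag size - 1 ; length = size P *)
Definition pd_width (P : seq {set T}) : nat := (\max_(X <- P) #|X|).-1.

Definition pathwidth_eq (e : rel T) (V : {set T}) (k : nat) : Prop :=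
  (exists P, is_path_decomp e V P /\ pd_width P = k) /\
  (forall P, is_path_decomp e V P -> k <= pd_width P).

Definition induced_rel (e : rel T) (V : {set T}) : rel T :=
  [rel x y | [&& e x y, x \in V & y \in V]].

Definition component (e : rel T) (V : {set T}) (x : T) : {set T} :=
  [set y in V | connect (induced_rel e V) x y].

Definition big_component (e : rel T) (V : {set T}) (x : T) : bool :=
  (x \in V) && (3 <= #|component e V x|).

Definition chunk_graph (e : rel T) (V : {set T}) : Prop :=
  exists x, big_component e V x /\
    forall y, big_component e V y -> component e V y = component e V x.

(* V is a union of connected components of G: closed under adjacency *)
Definition union_of_components (e : rel T) (V : {set T}) : Prop :=
  forall x y, x \in V -> e x y -> y \in V.

Definition first_bag (P : seq {set T}) := head set0 P.
Definition last_bag (P : seq {set T}) := last set0 P.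

Definition typeA (P : seq {set T}) : bool :=
  (#|first_bag P| <= 2) && (#|last_bag P| <= 2).
Definition typeB (P : seq {set T}) : bool :=
  (#|first_bag P| <= 2) (+) (#|last_bag P| <= 2).

Definition pconcat (P1 P2 : seq {set T}) : seq {set T} :=
  match P1, P2 with
  | x :: s1, y :: s2 =>
      if (#|last x s1| <= 2) && (#|y| <= 2)
      then belast x s1 ++ (last x s1 :|: y) :: s2
      else P1 ++ P2
  | _, _ => P1 ++ P2
  end.

Definition pconcat_all (Ps : seq (seq {set T})) : seq {set T} :=
  match Ps with
  | [::] => [::]
  | P :: Ps' => foldl pconcat P Ps'
  end.

Definition orient (f : bool) (P : seq {set T}) : seq {set T} :=
  if f then rev P else P.

End Defs.

Definition mu (a b : nat) : nat := if b == 0 then a.-1 else a + b./2.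

From mathcomp Require Import all_boot all_order all_fingroup.
From mathcomp Require Import zify.
Set Implicit Arguments. Unset Strict Implicit. Unset Printing Implicit Defensive.

(* Only the end profile of each decomposition matters: whether its first and
   its last bag have at most two vertices.  Since a chunk graph has at least
   three vertices, a decomposition of it never consists of a single small bag,
   so concatenating decompositions loses exactly one bag for every adjacent
   pair whose facing ends are both small.  The length is therefore the total
   length minus the number of such merges.  Counting ends, every merge uses
   two small ends, a Type A piece has two and a Type B piece one, which
   bounds the merges by a + b/2; when b = 0 the Type A pieces can only merge
   among themselves, which gives a - 1.  Putting one Type B piece first, then
   all Type A pieces, then the remaining Type B pieces in alternating
   orientation, and the Type C pieces last, attains the bound. *)

Lemma last_nseq (X : Type) (x : X) n : last x (nseq n x) = x.
Proof. by elim: n. Qed.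

Lemma map_index_uniq (X : eqType) (Y : Type) (g : nat -> Y) (s : seq X) :
  uniq s -> [seq g (index x s) | x <- s] = [seq g k | k <- iota 0 (size s)].
Proof.
elim: s g => [|x s IH] g //= /andP[xNs us]; rewrite eqxx; congr (_ :: _).
rewrite -[1]addn0 iotaDl -map_comp -(IH (g \o addn 1) us).
by apply/eq_in_map => y ys /=; case: eqP ys xNs => [-> ->|].
Qed.

Lemma map_const_in (X : eqType) (Y : Type) (g : X -> Y) (s : seq X) y :
  {in s, forall x, g x = y} -> map g s = nseq (size s) y.
Proof.
elim: s => [|x s IH] //= gy; rewrite gy ?mem_head // IH // => z zs.
by rewrite gy // inE zs orbT.
Qed.

Lemma count_enum_card (I : finType) (p : pred I) :
  count p (enum I) = #|[set i | p i]|.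
Proof.
rewrite cardsE cardE -size_filter enumT /enum_mem.
by congr size; apply: eq_filter.
Qed.

Lemma perm_map_enum_perm n (pi : 'S_n) :
  perm_eq (map pi (enum 'I_n)) (enum 'I_n).
Proof.
apply/(tuple_permP (t := ord_tuple n)); exists pi.
by apply: eq_map => j; rewrite tnth_ord_tuple.
Qed.

Section Profiles.
Implicit Types (s : seq (bool * bool)) (x : bool * bool).

Definition both_small x := x.1 && x.2.
Definition one_small x := x.1 (+) x.2.
Definition flip_if (b : bool) x := if b then (x.2, x.1) else x.

Lemma both_small_flip_if b x : both_small (flip_if b x) = both_small x.
Proof. by case: b; rewrite /both_small /= andbC. Qed.

Lemma one_small_flip_if b x : one_small (flip_if b x) = one_small x.
Proof. by case: b; rewrite /one_small /= addbC. Qed.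

Fixpoint merges s : nat :=
  if s is x :: s' then (x.2 && (head (false, false) s').1) + merges s' else 0.

Lemma merges_cat s1 s2 :
  merges (s1 ++ s2) =
  merges s1 + ((last (false, false) s1).2 && (head (false, false) s2).1)
    + merges s2.
Proof.
by elim: s1 => [|x s1 IH] //=; rewrite IH; case: s1 {IH} => [|y s1] /=; lia.
Qed.

(* Each merge consumes two small ends; a small first end is never consumed. *)
Lemma merges_double_le s :
  2 * merges s + (head (false, false) s).1 <=
  2 * count both_small s + count one_small s.
Proof.
elim: s => [|[[] []] s IH] //=; rewrite /both_small /one_small /= in IH *;
  move: IH; case: (head (false, false) s).1 => /=; lia.
Qed.

Lemma merges_le_pred s :
  count one_small s = 0 -> merges s <= (count both_small s).-1.
Proof.
rewrite /one_small /both_small.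
elim: s => [|[[] []] s IH] //= noB; move: (IH noB).
by case: s {IH} noB => [|[[] []] s] //=; lia.
Qed.

Lemma merges_le_mu s : merges s <= mu (count both_small s) (count one_small s).
Proof.
rewrite /mu; case: eqP => [/merges_le_pred //|_].
have := merges_double_le s; have := odd_double_half (count one_small s).
rewrite -muln2; case: (odd _) => /=; lia.
Qed.

Lemma merges_nseq_both a : merges (nseq a (true, true)) = a.-1.
Proof. by elim: a => [|a IH] //=; case: a IH => [|a] //= ->. Qed.

Lemma merges_nseq_none k : merges (nseq k (false, false)) = 0.
Proof. by elim: k => [|k IH] //=; case: k IH. Qed.

Fixpoint zigzag (b : bool) (n : nat) : seq (bool * bool) :=
  if n is n'.+1 then (b, ~~ b) :: zigzag (~~ b) n' else [::].

Lemma merges_zigzag b n : merges (zigzag b n) = if b then n.-1./2 else n./2.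
Proof. by elim: n b => [|n IH] [] //=; rewrite IH //; case: n {IH}. Qed.

Lemma zigzag_iota m n :
  [seq (odd k, ~~ odd k) | k <- iota m n] = zigzag (odd m) n.
Proof. by elim: n m => [|n IH] m //=; rewrite IH /=; case: (odd m). Qed.

Lemma merges_optimal_profile a b k :
  merges (take 1 (zigzag false b) ++ nseq a (true, true) ++
          drop 1 (zigzag false b) ++ nseq k (false, false)) = mu a b.
Proof.
rewrite /mu; case: b => [|n] /=.
  rewrite merges_cat merges_nseq_both merges_nseq_none.
  by case: a k => [|a] [|k] /=; rewrite ?last_nseq ?andbF; lia.
rewrite take0 drop0 /= !merges_cat merges_zigzag.
rewrite merges_nseq_both merges_nseq_none.
by case: a k n => [|a] [|k] [|n] /=; rewrite ?last_nseq ?andbF ?andbT /=; lia.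
Qed.

End Profiles.

Lemma optimal_arrangement (I : eqType) (E : seq I) (p : I -> bool * bool) :
  uniq E ->
  exists2 r, perm_eq r E & exists o : I -> bool,
    merges [seq flip_if (o i) (p i) | i <- r] =
    mu (count (both_small \o p) E) (count (one_small \o p) E).
Proof.
move=> uE; pose EA := filter (both_small \o p) E.
pose EN := filter (predC (both_small \o p)) E.
pose EB := filter (one_small \o p) EN.
pose EC := filter (predC (one_small \o p)) EN.
exists (take 1 EB ++ EA ++ drop 1 EB ++ EC).
  rewrite perm_catCA (catA (take 1 EB)) cat_take_drop perm_sym.
  by rewrite -(perm_filterC (both_small \o p)) perm_cat2l perm_sym perm_filterC.
pose o i := (p i).2 == odd (index i EB); exists o.
pose h i := flip_if (o i) (p i).
have hEA : map h EA = nseq (size EA) (true, true).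
  apply: map_const_in => i; rewrite mem_filter => /andP[/= pA _].
  by rewrite /h /flip_if; case: (o i); move: pA; case: (p i) => [[] []].
have hEC : map h EC = nseq (size EC) (false, false).
  apply: map_const_in => i; rewrite !mem_filter => /and3P[/= pB pA _].
  by rewrite /h /flip_if; case: (o i); move: pA pB; case: (p i) => [[] []].
have hEB : map h EB = zigzag false (size EB).
  have uEB : uniq EB by rewrite !filter_uniq.
  rewrite -(zigzag_iota 0) -(map_index_uniq _ uEB); apply/eq_in_map => i.
  rewrite mem_filter => /andP[/= pB _]; rewrite /h /o /flip_if.
  by case: (odd _); move: pB; case: (p i) => [[] []].
have -> : count (one_small \o p) E = size EB.
  rewrite size_filter count_filter; apply: eq_count => i /=.
  by rewrite /one_small /both_small; case: (p i) => [[] []].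
have -> : count (both_small \o p) E = size EA by rewrite size_filter.
by rewrite !map_cat map_take map_drop hEA hEB hEC merges_optimal_profile.
Qed.

Section Concatenation.
Variable T : finType.
Implicit Types P acc : seq {set T}.

Definition small_ends P := (#|first_bag P| <= 2, #|last_bag P| <= 2).

(* A decomposition consisting of one small bag would be swallowed whole by a
   merge, and the concatenation would end with a bag of the previous piece. *)
Definition concat_safe P :=
  (0 < size P) && ((size P == 1) ==> (2 < #|first_bag P|)).

Lemma small_ends_orient b P :
  small_ends (orient b P) = flip_if b (small_ends P).
Proof.
case: b => //; rewrite /small_ends /first_bag /last_bag /=.
case/lastP: P => [|P X] //; rewrite rev_rcons last_rcons.
by case: P => [|Y P] //=; rewrite rev_cons last_rcons.
Qed.

Lemma size_orient b P : size (orient b P) = size P.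
Proof. by case: b; rewrite ?size_rev. Qed.

Lemma concat_safe_orient b P : concat_safe P -> concat_safe (orient b P).
Proof.
by case: b => //; rewrite /concat_safe /= size_rev; case: P => [|X [|Y P]].
Qed.

Lemma last_bag_pconcat acc P : 0 < size acc -> concat_safe P ->
  last_bag (pconcat acc P) = last_bag P.
Proof.
case: acc => [//|X s1]; case: P => [//|Y s2] _.
rewrite /concat_safe /first_bag /last_bag /pconcat /=.
case: ifP => [/andP[_ smallY]|_ _]; last by rewrite /= last_cat.
by case: s2 => [|Z s2] /=; rewrite ?ltnNge ?smallY // last_cat.
Qed.

Lemma size_pconcat acc P : 0 < size acc -> 0 < size P ->
  size (pconcat acc P) + ((small_ends acc).2 && (small_ends P).1) =
  size acc + size P.
Proof.
case: acc => [//|X s1]; case: P => [//|Y s2] _ _.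
rewrite /small_ends /first_bag /last_bag /pconcat /=.
by case: ifP => _; rewrite /= size_cat ?size_belast /=; lia.
Qed.

Lemma size_foldl_pconcat acc Ps : 0 < size acc -> all concat_safe Ps ->
  size (foldl (@pconcat T) acc Ps) + merges (map small_ends (acc :: Ps)) =
  size acc + sumn (map size Ps).
Proof.
elim: Ps acc => [|P Ps IH] acc acc_gt0 /=; first by rewrite andbF !addn0.
case/andP=> safeP safePs; have P_gt0 : 0 < size P by case/andP: safeP.
have size_eq := size_pconcat acc_gt0 P_gt0.
have gt0 : 0 < size (pconcat acc P) by move: size_eq; case: (_ && _) => /=; lia.
have := IH _ gt0 safePs; rewrite /= (last_bag_pconcat acc_gt0 safeP).
by move: size_eq; rewrite /small_ends /=; lia.
Qed.

Lemma size_pconcat_all Ps : all concat_safe Ps ->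
  size (pconcat_all Ps) + merges (map small_ends Ps) = sumn (map size Ps).
Proof.
case: Ps => [//|P Ps] /= /andP[safeP safePs].
by apply: size_foldl_pconcat safePs; case/andP: safeP.
Qed.

Lemma chunk_decomp_concat_safe e V P :
  is_path_decomp e V P -> chunk_graph e V -> concat_safe P.
Proof.
case=> _ covers _ _ [x [/andP[xV big_x] _]].
have V_ge3 : 3 <= #|V|.
  apply: leq_trans big_x (subset_leq_card _).
  by apply/subsetP => y; rewrite inE => /andP[].
have [X XP _] := covers x xV.
apply/andP; split; first by case: P XP {covers}.
case: P XP covers => [//|X0 [|? ?]] _ covers //=.
apply: leq_trans V_ge3 (subset_leq_card _); apply/subsetP => y yV.
by have [Y] := covers y yV; rewrite inE => /eqP->.
Qed.

End Concatenation.
Arguments small_ends {T}.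
Arguments concat_safe {T}.

Section Arrangement.
Variables (T : finType) (c : nat) (Q : 'I_c -> seq {set T}).

Definition arrange (pi : 'S_c) (f : {ffun 'I_c -> bool}) :=
  [seq orient (f j) (Q (pi j)) | j <- enum 'I_c].

Lemma sumn_size_arrange pi f :
  sumn (map size (arrange pi f)) = \sum_(i < c) size (Q i).
Proof.
have -> : map size (arrange pi f) = map (size \o Q) (map pi (enum 'I_c)).
  by rewrite -!map_comp; apply: eq_map => j /=; rewrite size_orient.
rewrite (perm_sumn (perm_map _ (perm_map_enum_perm pi))).
by rewrite sumnE big_map big_enum.
Qed.

Lemma count_arrange (P : pred (bool * bool)) pi f :
  (forall b x, P (flip_if b x) = P x) ->
  count P (map small_ends (arrange pi f)) = #|[set i | P (small_ends (Q i))]|.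
Proof.
move=> P_flip; rewrite -count_enum_card -(seq.permP (perm_map_enum_perm pi)).
rewrite -map_comp !count_map; apply: eq_count => j /=.
by rewrite small_ends_orient.
Qed.

Lemma arrange_optimal : exists pi f,
  merges (map small_ends (arrange pi f)) =
  mu #|[set i | typeA (Q i)]| #|[set i | typeB (Q i)]|.
Proof.
have [r r_perm [o opt]] :=
  optimal_arrangement (fun i => small_ends (Q i)) (enum_uniq 'I_c).
have [pi r_pi] := tuple_permP (t := ord_tuple c) r_perm.
exists pi, [ffun j => o (pi j)]; rewrite -!count_enum_card -opt r_pi -!map_comp.
congr merges; apply: eq_map => j /=.
by rewrite ffunE small_ends_orient tnth_ord_tuple.
Qed.

Hypothesis Q_safe : forall i, concat_safe (Q i).

Lemma size_arrange pi f :
  size (pconcat_all (arrange pi f)) + merges (map small_ends (arrange pi f)) =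
  \sum_(i < c) size (Q i).
Proof.
rewrite size_pconcat_all ?sumn_size_arrange //.
by apply/allP => _ /mapP[j _ ->]; apply: concat_safe_orient.
Qed.

End Arrangement.

Theorem mainTheorem20 (T : finType) (e : rel T) (c : nat)
    (C : 'I_c -> {set T}) (Q : 'I_c -> seq {set T}) :
  simple_graph e ->
  pathwidth_eq e [set: T] 3 ->
  (forall i j, i != j -> [disjoint C i & C j]) ->
  (\bigcup_(i < c) C i = [set: T]) ->
  (forall i, union_of_components e (C i)) ->
  (forall i, chunk_graph e (C i)) ->
  (forall i, is_path_decomp e (C i) (Q i) /\ pd_width (Q i) <= 3) ->
  let a := #|[set i | typeA (Q i)]| in
  let b := #|[set i | typeB (Q i)]| in
  let L (pi : 'S_c) (f : {ffun 'I_c -> bool}) :=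
    size (pconcat_all [seq orient (f j) (Q (pi j)) | j <- enum 'I_c]) in
  (exists pi f, L pi f + mu a b = \sum_(i < c) size (Q i)) /\
  (forall pi f, \sum_(i < c) size (Q i) <= L pi f + mu a b).
Proof.
move=> _ _ _ _ _ chunk decomp a b L.
have Q_safe i : concat_safe (Q i).
  by apply: chunk_decomp_concat_safe (chunk i); case: (decomp i).
split.
  have [pi [f opt]] := arrange_optimal Q.
  by exists pi, f; rewrite -opt; apply: size_arrange.
move=> pi f; rewrite -(size_arrange Q_safe pi f) leq_add2l.
have := merges_le_mu (map small_ends (arrange Q pi f)).
by rewrite (count_arrange Q pi f both_small_flip_if)
  (count_arrange Q pi f one_small_flip_if).
Qed.
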